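(* Let $G$ be a finite group, $\varphi\in\mathrm{Aut}(G)$, and $U$ a subgroup with $\Delta(G,\varphi)\leq U\leq G\times G$. Then for $i\in\{1,2\}$ one has $k_i(U')=[k_i(U),G]$.
   Context: $\Delta(G,\varphi)=\{(g,\varphi(g)):g\in G\}\leq G\times G$ (twisted diagonal subgroup). For $U\leq G\times G$: $k_1(U)=\{g:(g,1)\in U\}$, $k_2(U)=\{h:(1,h)\in U\}$. $U'$ denotes the commutator subgroup of $U$, and $[X,G]$ the subgroup generated by commutators $[x,g]$, $x\in X$, $g\in G$. *)

From HB Require Import structures.
From mathcomp Require Import all_boot all_fingroup all_solvable.
Set Implicit Arguments.
Unset Strict Implicit.
Unset Printing Implicit Defensive.
Local Open Scope group_scope.

Definition twisted_diag (gT : finGroupType) (G : {set gT}) (phi : {perm gT})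
  : {set gT * gT} := [set (g, phi g) | g in G].

Definition k1 (gT : finGroupType) (U : {set gT * gT}) : {set gT} :=
  [set g | (g, 1) \in U].
Definition k2 (gT : finGroupType) (U : {set gT * gT}) : {set gT} :=
  [set h | (1, h) \in U].

From HB Require Import structures.
From mathcomp Require Import all_boot all_fingroup all_solvable.

(* Let K = k_1(U) and N = [K, G].  Since Delta(G, phi) <= U, every (u, v) in U
   factors as (u phi^-1(v)^-1, 1) (phi^-1(v), v), so U = (K x 1) Delta.  As K/N
   is central in G/N, the map (u, v) |-> u phi^-1(v)^-1 N is a homomorphism from
   U into the abelian group K/N; it kills U' and sends (c, 1) to cN, whence
   k_1(U') <= N.  Conversely ([x, g], 1) = [(x, 1), (g, phi g)].  Swapping the
   coordinates exchanges k_1 and k_2 and turns Delta(G, phi) into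
   Delta(G, phi^-1), which gives the statement for k_2. *)

Set Implicit Arguments.
Unset Strict Implicit.
Unset Printing Implicit Defensive.

Local Open Scope group_scope.

Lemma k1E (gT : finGroupType) (A : {set gT * gT}) :
  k1 A = pairg1 gT @*^-1 A.
Proof. by apply/setP => x; rewrite !inE. Qed.

Fact k1_group_set (gT : finGroupType) (U : {group gT * gT}) : group_set (k1 U).
Proof. by rewrite k1E groupP. Qed.
Canonical k1_group gT U := Group (@k1_group_set gT U).

Section ExternalProduct.
Variables gT1 gT2 : finGroupType.

Lemma commg_pair (x1 y1 : gT1) (x2 y2 : gT2) :
  [~ (x1, x2), (y1, y2)] = ([~ x1, y1], [~ x2, y2]).
Proof. by []. Qed.

Lemma swap_pair_morphM : {morph @swap_pair gT1 gT2 : x y / x * y}.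
Proof. by []. Qed.
Canonical swap_pair_morphism := @Morphism _ _ setT _ (in2W swap_pair_morphM).

Lemma mem_morphim_swap_pair (A : {set gT1 * gT2}) x y :
  ((y, x) \in swap_pair @* A) = ((x, y) \in A).
Proof.
rewrite morphimEsub ?subsetT //.
by apply/imsetP/idP => [[[a b] Aab [-> ->]] | Axy] //; exists (x, y).
Qed.

Lemma morphim_swap_pair_setX (A : {set gT1}) (B : {set gT2}) :
  swap_pair @* setX A B = setX B A.
Proof. by apply/setP => -[y x]; rewrite mem_morphim_swap_pair !inE andbC. Qed.

End ExternalProduct.

Lemma k2_swap (gT : finGroupType) (A : {set gT * gT}) :
  k2 A = k1 (swap_pair @* A).
Proof. by apply/setP => x; rewrite !inE mem_morphim_swap_pair. Qed.

Lemma mem_twisted_diag (gT : finGroupType) (G : {set gT}) (phi : {perm gT})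
    x y :
  ((x, y) \in twisted_diag G phi) = (x \in G) && (y == phi x).
Proof.
by apply/imsetP/andP => [[g Gg [-> ->]] | [Gx /eqP->]]; last exists x.
Qed.

Lemma morphim_swap_pair_twisted_diag (gT : finGroupType) (G : {group gT})
    (phi : {perm gT}) :
  phi \in Aut G -> swap_pair @* twisted_diag G phi = twisted_diag G phi^-1.
Proof.
move=> /groupVr /setIdP[onG _]; apply/setP => -[y x].
rewrite mem_morphim_swap_pair !mem_twisted_diag eq_sym (canF_eq (permK phi)).
by case: eqP => [->|]; rewrite ?andbF // (perm_closed _ onG).
Qed.

Definition untwist (gT : finGroupType) (phi : {perm gT}) (w : gT * gT) : gT :=
  w.1 * (phi^-1 w.2)^-1.

Lemma untwistM (gT : finGroupType) (G : {group gT}) (phi : {perm gT}) x y :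
    phi \in Aut G -> x.2 \in G -> y.2 \in G ->
  untwist phi (x * y) = untwist phi y ^ x.1^-1 * untwist phi x.
Proof.
move=> /groupVr /Aut_morphic /morphicP phiVM Gx2 Gy2.
by rewrite /untwist phiVM // invMg conjgE invgK !mulgA mulgKV.
Qed.

Section DerivedKernel.
Variables (gT : finGroupType) (G : {group gT}) (phi : {perm gT}).
Variable U : {group gT * gT}.
Hypotheses (phiG : phi \in Aut G) (sDU : twisted_diag G phi \subset U).
Hypothesis sUGG : U \subset setX G G.

Let K := k1 U.
Let N := [~: K, G].

Lemma twisted_diagU g : g \in G -> (g, phi g) \in U.
Proof.
by move=> Gg; apply: (subsetP sDU); rewrite mem_twisted_diag Gg eqxx.
Qed.

Lemma mem_U_setX w : w \in U -> w.1 \in G /\ w.2 \in G.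
Proof. by case: w => u v /(subsetP sUGG); rewrite in_setX => /andP. Qed.

Lemma sub_k1_G : K \subset G.
Proof. by apply/subsetP => x; rewrite inE => /mem_U_setX[]. Qed.

Lemma untwist_k1 w : w \in U -> untwist phi w \in K.
Proof.
case: w => u v Uw; have [_ Gv] := mem_U_setX Uw.
have := twisted_diagU (Aut_closed (groupVr phiG) Gv); rewrite permKV => Dv.
by rewrite inE -(mulgV v); apply: groupM Uw (groupVr Dv).
Qed.

Let nNG : G \subset 'N(N) := commg_normr G K.

Let untwist_norm w : w \in U -> untwist phi w \in 'N(N).
Proof. by move/untwist_k1/(subsetP sub_k1_G)/(subsetP nNG). Qed.

Definition untwist_quo w := coset N (untwist phi w).

Lemma untwist_quo_central w g :
  w \in U -> g \in G -> commute (untwist_quo w) (coset N g).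
Proof.
move=> Uw Gg; have cKG : K / N \subset 'C(G / N) by exact: quotient_cents2r.
apply: (centP (subsetP cKG _ (mem_quotient N (untwist_k1 Uw)))).
exact: mem_quotient.
Qed.

Lemma untwist_quoM : {in U &, {morph untwist_quo : x y / x * y}}.
Proof.
move=> x y Ux Uy.
have [Gx1 Gx2] := mem_U_setX Ux; have [_ Gy2] := mem_U_setX Uy.
have nNx1 : x.1^-1 \in 'N(N) by rewrite groupV (subsetP nNG).
rewrite /untwist_quo (untwistM phiG) // morphM ?groupJ ?untwist_norm //.
rewrite morphJ ?untwist_norm // conjgE (untwist_quo_central Uy) ?groupV //.
by rewrite mulKg (untwist_quo_central Ux) // (subsetP sub_k1_G) ?untwist_k1.
Qed.

Canonical untwist_quo_morphism := Morphism untwist_quoM.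

Lemma der1_sub_ker_untwist_quo : [~: U, U] \subset 'ker untwist_quo.
Proof.
have sImKN : untwist_quo @* U \subset K / N.
  apply/subsetP => _ /morphimP[w _ Uw ->].
  exact: mem_quotient (untwist_k1 Uw).
have abKN : abelian (K / N) by apply: sub_der1_abelian; apply: commgS sub_k1_G.
rewrite -sub_morphim_pre ?der1_subG // morphimR //.
by rewrite (commG1P (abelianS sImKN abKN)).
Qed.

Lemma k1_der1 : k1 [~: U, U] = [~: K, G].
Proof.
apply/eqP; rewrite eqEsubset; apply/andP; split.
  apply/subsetP => c; rewrite inE => U'c.
  have [Gc _] := mem_U_setX (subsetP (der1_subG U) _ U'c).
  apply: coset_idr; first exact: (subsetP nNG).
  have phiV1 : phi^-1 1 = 1 by rewrite -(autmE (groupVr phiG)) morph1.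
  have := mker (subsetP der1_sub_ker_untwist_quo _ U'c).
  by rewrite /= /untwist_quo /untwist /= phiV1 invg1 mulg1.
rewrite gen_subG; apply/subsetP => _ /imset2P[x g Kx Gg ->]; rewrite inE.
have := mem_commg (_ : (x, 1) \in U) (twisted_diagU Gg).
by rewrite commg_pair comm1g; apply; rewrite inE in Kx.
Qed.

End DerivedKernel.

Theorem proposition5p2 (gT : finGroupType) (G : {group gT}) (phi : {perm gT})
  (U : {group gT * gT}) :
  phi \in Aut G ->
  twisted_diag G phi \subset U -> U \subset setX G G ->
  k1 [~: U, U] = [~: k1 U, G] /\ k2 [~: U, U] = [~: k2 U, G].
Proof.
move=> phiG sDU sUGG; split; first exact: k1_der1 phiG sDU sUGG.
rewrite !k2_swap morphimR ?subsetT //.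
apply: (k1_der1 (groupVr phiG)).
  by rewrite -morphim_swap_pair_twisted_diag // morphimS.
by rewrite -[setX G G]morphim_swap_pair_setX morphimS.
Qed.
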